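(* Let $k>0$, $\mu>0$ and define, for a second-rank tensor $\mathbf A$ on $\mathbb{R}^3$ with $\det\mathbf A>0$, $$\rho_{\mathrm R}\psi_{\mathrm{el}}(\mathbf A):=\frac{k}{2}\Big(\ln\sqrt{\det\mathbf A}\Big)^2+\frac{\mu}{2}\Big(\operatorname{tr}\big((\det\mathbf A)^{-1/3}\mathbf A\big)-3\Big).$$ Let $M$ be the set of symmetric positive definite second-rank tensors on $\mathbb{R}^3$ with determinant $1$, and for $\mathbf C^{(1)},\mathbf C^{(2)}\in M$ put $\mathrm{Dist}(\mathbf C^{(1)},\mathbf C^{(2)}):=\sqrt{\rho_{\mathrm R}\psi_{\mathrm{el}}\big(\mathbf C^{(1)}(\mathbf C^{(2)})^{-1}\big)}$. Let $L<\infty$. Then there exist constants $\varepsilon>0$, $C_3>0$ and $C_4<\infty$ such that for all $\mathbf C^{(1)},\mathbf C^{(2)}\in M$ satisfying $\|(\mathbf C^{(j)})^{1/2}\|<L$ and $\|(\mathbf C^{(j)})^{-1/2}\|<L$ for $j\in\{1,2\}$ and $\|\mathbf C^{(1)}-\mathbf C^{(2)}\|\le\varepsilon$, one has $$C_3\,\|\mathbf C^{(1)}-\mathbf C^{(2)}\|\le \mathrm{Dist}(\mathbf C^{(1)},\mathbf C^{(2)})\le C_4\,\|\mathbf C^{(1)}-\mathbf C^{(2)}\|.$$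
   Context: $\|\mathbf A\|=\sqrt{\operatorname{tr}(\mathbf A\mathbf A^{\mathrm T})}$ is the Frobenius norm; $\mathbf C^{1/2}$ is the symmetric positive definite square root. $\rho_{\mathrm R}\psi_{\mathrm{el}}$ is treated as a single function. *)

From HB Require Import structures.
From mathcomp Require Import all_boot all_order all_algebra.
From mathcomp Require Import all_classical all_reals all_analysis.
Set Implicit Arguments. Unset Strict Implicit. Unset Printing Implicit Defensive.
Import Order.TTheory GRing.Theory Num.Theory.
Local Open Scope classical_set_scope.
Local Open Scope ring_scope.

Definition frob {R : realType} (A : 'M[R]_3) : R := Num.sqrt (\tr (A *m A^T)).

Definition spd {R : realType} (A : 'M[R]_3) : Prop :=
  A^T = A /\ forall v : 'rV[R]_3, v != 0 -> 0 < (v *m A *m v^T) 0 0.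

(* The symmetric positive definite square root C^{1/2}: the (unique) SPD S
   with S S = C (chosen classically; C is SPD in all uses). *)
Definition sqrtm {R : realType} (C : 'M[R]_3) : 'M[R]_3 :=
  xget 0 [set S : 'M[R]_3 | spd S /\ S *m S = C].

Definition inM {R : realType} (C : 'M[R]_3) : Prop := spd C /\ \det C = 1.

Definition psi_el {R : realType} (k mu : R) (A : 'M[R]_3) : R :=
  k / 2 * (ln (Num.sqrt (\det A))) ^+ 2
  + mu / 2 * (\tr ((\det A) `^ (- 3^-1) *: A) - 3).

Definition Dist {R : realType} (k mu : R) (C1 C2 : 'M[R]_3) : R :=
  Num.sqrt (psi_el k mu (C1 *m invmx C2)).

From HB Require Import structures.
From mathcomp Require Import all_boot all_order all_algebra perm.
From mathcomp Require Import all_classical all_reals all_analysis.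
From mathcomp Require Import ring lra.
Import Order.TTheory GRing.Theory Num.Theory.
Set Implicit Arguments.
Unset Strict Implicit.
Unset Printing Implicit Defensive.
Local Open Scope ring_scope.

(* Let S be the positive definite square root of C2 and Y := S^-1 C1 S^-1 - 1, so
   that C1 - C2 = S Y S: the bounds on S and S^-1 make ||Y|| and ||C1 - C2||
   comparable.  Since C1 C2^-1 is
   similar to 1 + Y and has determinant 1, Dist^2 = mu/2 tr Y.  For symmetric Y,
     det (1 + Y) = 1 + tr Y + ((tr Y)^2 - ||Y||^2) / 2 + det Y,  |det Y| <= 6 ||Y||^3,
   so det (1 + Y) = 1 forces ||Y||^2 / 8 <= tr Y <= ||Y||^2 once ||Y|| <= 1/24.
   That sqrtm C2 really is a square root requires one to exist; for 3x3 matrices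
   it is given in closed form by the Cayley-Hamilton theorem. *)

Definition i0 : 'I_3 := @Ordinal 3 0 isT.
Definition i1 : 'I_3 := @Ordinal 3 1 isT.
Definition i2 : 'I_3 := @Ordinal 3 2 isT.

Lemma ord3_eqE : ((i0 == i1) = false) * ((i0 == i2) = false) * ((i1 == i0) = false)
  * ((i1 == i2) = false) * ((i2 == i0) = false) * ((i2 == i1) = false)
  * ((i0 == i0) = true) * ((i1 == i1) = true) * ((i2 == i2) = true).
Proof. by []. Qed.

Lemma ord3P (i : 'I_3) : [\/ i = i0, i = i1 | i = i2].
Proof. by case: i => [[|[|[|//]]] ?]; [constructor 1|constructor 2|constructor 3]; apply: val_inj. Qed.

Lemma big_ord3 {V : nmodType} (F : 'I_3 -> V) : \sum_(i < 3) F i = F i0 + F i1 + F i2.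
Proof. by rewrite !big_ord_recr big_ord0 /= add0r; congr (F _ + F _ + F _); apply: val_inj. Qed.

Ltac entrywise3 := let i := fresh "i" in let j := fresh "j" in
  apply/matrixP => i j; case: (ord3P i) => ->; case: (ord3P j) => ->.

Definition det3 {R : comNzRingType} (A : 'M[R]_3) : R :=
  A i0 i0 * (A i1 i1 * A i2 i2 - A i1 i2 * A i2 i1)
  - A i0 i1 * (A i1 i0 * A i2 i2 - A i1 i2 * A i2 i0)
  + A i0 i2 * (A i1 i0 * A i2 i1 - A i1 i1 * A i2 i0).

Lemma det_mx33 {R : comNzRingType} (A : 'M[R]_3) : \det A = det3 A.
Proof.
have big_ord2 (F : 'I_2 -> R) : \sum_(i < 2) F i = F ord0 + F (lift ord0 ord0).
  by rewrite !big_ord_recr big_ord0 /= add0r; congr (F _ + F _); apply: val_inj.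
have [l01 l02] : lift i0 ord0 = i1 /\ lift i0 (lift ord0 ord0) = i2 by split; apply: val_inj.
have [l11 l12] : lift i1 ord0 = i0 /\ lift i1 (lift ord0 ord0) = i2 by split; apply: val_inj.
have [l21 l22] : lift i2 ord0 = i0 /\ lift i2 (lift ord0 ord0) = i1 by split; apply: val_inj.
have [m1 m2] : lift ord0 (ord0 : 'I_1) = lift ord0 ord0 :> 'I_2 /\
               lift (lift ord0 ord0) (ord0 : 'I_1) = ord0 :> 'I_2 by split; apply: val_inj.
rewrite (expand_det_row _ i0) big_ord3 /cofactor.
rewrite !(expand_det_row _ ord0) !big_ord2 /cofactor !det_mx11 !mxE /=.
rewrite ?m1 ?m2 ?mxE ?l01 ?l02 ?l11 ?l12 ?l21 ?l22 /det3 /=.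
ring.
Qed.

Definition sum_principal_minors2 {R : comNzRingType} (C : 'M[R]_3) : R :=
  (C i0 i0 * C i1 i1 - C i0 i1 * C i1 i0) + (C i0 i0 * C i2 i2 - C i0 i2 * C i2 i0)
  + (C i1 i1 * C i2 i2 - C i1 i2 * C i2 i1).

Lemma mulmx_affine {R : comNzRingType} (C : 'M[R]_3) (a b c d : R) :
  (a *: C + b%:M) *m (c *: C + d%:M)
  = (a * c) *: (C *m C) + (a * d + b * c) *: C + (b * d) *: 1%:M.
Proof. entrywise3; rewrite !mxE !big_ord3 !mxE !ord3_eqE /= ?mulr1n ?mulr0n; ring. Qed.

(* A rearrangement of the Cayley-Hamilton identity
   C^3 = (tr C) C^2 - (sum_principal_minors2 C) C + (det C) 1. *)
Lemma cayley_hamilton_sqr {R : comNzRingType} (C : 'M[R]_3) (s1 s2 : R) :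
  (s1 *: C + 1%:M) *m (s1 *: C + 1%:M) - C *m (C + s2%:M) *m (C + s2%:M)
  = (s1 ^+ 2 - \tr C - 2 * s2) *: (C *m C) + (2 * s1 + sum_principal_minors2 C - s2 ^+ 2) *: C
    + (1 - \det C) *: 1%:M.
Proof.
rewrite det_mx33 /mxtrace big_ord3; entrywise3;
rewrite !mxE !big_ord3 !mxE !big_ord3 !mxE !ord3_eqE /= /det3 /sum_principal_minors2
  ?mulr1n ?mulr0n; ring.
Qed.

Lemma det_mx3_add1 {R : comNzRingType} (Y : 'M[R]_3) :
  2 * \det (Y + 1%:M) = 2 + 2 * \tr Y + \tr Y ^+ 2 - \tr (Y *m Y) + 2 * \det Y.
Proof.
rewrite !det_mx33 /mxtrace !big_ord3 !mxE !big_ord3 /det3 !mxE !ord3_eqE /= ?mulr1n ?mulr0n.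
ring.
Qed.

Section PositiveDefinite.
Context {R : realType}.
Implicit Types (A C : 'M[R]_3) (v : 'rV[R]_3).

Definition qform A v := (v *m A *m v^T) 0 0.

Definition sqnorm v := (v *m v^T) 0 0.

Lemma qformD A1 A2 v : qform (A1 + A2) v = qform A1 v + qform A2 v.
Proof. by rewrite /qform mulmxDr mulmxDl mxE. Qed.

Lemma qformZ a A v : qform (a *: A) v = a * qform A v.
Proof. by rewrite /qform -scalemxAr -scalemxAl mxE. Qed.

Lemma qform1 v : qform 1%:M v = sqnorm v.
Proof. by rewrite /qform mulmx1. Qed.

Lemma qform_sqr A v : A^T = A -> qform (A *m A) v = sqnorm (v *m A).
Proof. by move=> sA; rewrite /qform /sqnorm trmx_mul sA !mulmxA. Qed.

Lemma sqnormE v : sqnorm v = v 0 i0 ^+ 2 + v 0 i1 ^+ 2 + v 0 i2 ^+ 2.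
Proof. by rewrite /sqnorm mxE big_ord3 !mxE !expr2. Qed.

Lemma sqnorm_ge0 v : 0 <= sqnorm v.
Proof. by rewrite sqnormE !addr_ge0 ?sqr_ge0. Qed.

Lemma sqnorm_gt0 v : v != 0 -> 0 < sqnorm v.
Proof.
move=> v0; rewrite lt_def sqnorm_ge0 andbT; apply: contra v0.
rewrite sqnormE !paddr_eq0 ?addr_ge0 ?sqr_ge0 // !sqrf_eq0.
move=> /andP[/andP[/eqP x0 /eqP y0] /eqP z0]; apply/eqP/rowP => j.
by rewrite mxE; case: (ord3P j) => ->.
Qed.

Definition vec3 (x y z : R) : 'rV[R]_3 :=
  \row_j (if j == i0 then x else if j == i1 then y else z).

Lemma qform_vec3 A x y z : A^T = A ->
  qform A (vec3 x y z) = x ^+ 2 * A i0 i0 + y ^+ 2 * A i1 i1 + z ^+ 2 * A i2 i2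
    + 2 * (x * y * A i0 i1 + x * z * A i0 i2 + y * z * A i1 i2).
Proof.
move=> sA; have sym i j : A j i = A i j by rewrite -{1}sA mxE.
rewrite /qform mxE big_ord3 !mxE !big_ord3 !mxE !ord3_eqE /= !(sym i0 i1, sym i0 i2, sym i1 i2).
ring.
Qed.

Lemma vec3_neq0 x y z : (x != 0) || (y != 0) || (z != 0) -> vec3 x y z != 0.
Proof.
apply: contraTN => /eqP v0; have e j : (vec3 x y z) 0 j = 0 by rewrite v0 mxE.
by move: (e i0) (e i1) (e i2); rewrite !mxE !ord3_eqE /= => -> -> ->; rewrite eqxx.
Qed.

Lemma spd_trace_minors_gt0 C : spd C -> 0 < \tr C /\ 0 < sum_principal_minors2 C.
Proof.
move=> [sC pC]; have sym i j : C j i = C i j by rewrite -{1}sC mxE.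
have q x y z : (x != 0) || (y != 0) || (z != 0) -> 0 < qform C (vec3 x y z).
  by move=> /vec3_neq0; apply: pC.
have d0 : 0 < C i0 i0 by move: (q 1 0 0); rewrite qform_vec3 // oner_eq0 /=; nra.
have d1 : 0 < C i1 i1 by move: (q 0 1 0); rewrite qform_vec3 // oner_eq0 orbT /=; nra.
have d2 : 0 < C i2 i2 by move: (q 0 0 1); rewrite qform_vec3 // oner_eq0 orbT /=; nra.
(* On (C i j) e_i - (C i i) e_j the form equals C i i times the (i, j) principal minor. *)
have m01 : 0 < C i0 i0 * C i1 i1 - C i0 i1 ^+ 2.
  move: (q (C i0 i1) (- C i0 i0) 0); rewrite qform_vec3 // oppr_eq0 (gt_eqF d0) orbT.
  by move=> /(_ isT); nra.
have m02 : 0 < C i0 i0 * C i2 i2 - C i0 i2 ^+ 2.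
  move: (q (C i0 i2) 0 (- C i0 i0)); rewrite qform_vec3 // oppr_eq0 (gt_eqF d0) orbT.
  by move=> /(_ isT); nra.
have m12 : 0 < C i1 i1 * C i2 i2 - C i1 i2 ^+ 2.
  move: (q 0 (C i1 i2) (- C i1 i1)); rewrite qform_vec3 // oppr_eq0 (gt_eqF d1) orbT.
  by move=> /(_ isT); nra.
rewrite /mxtrace big_ord3 /sum_principal_minors2 !(sym i0 i1, sym i0 i2, sym i1 i2) -!expr2.
split; lra.
Qed.

Lemma spd_unitmx C : spd C -> C \in unitmx.
Proof.
move=> [_ pC]; rewrite unitmxE unitfE; apply/negP => /det0P [v v0 vC].
by have := pC v v0; rewrite vC mul0mx mxE ltxx.
Qed.

Lemma spdD_scalar C a : spd C -> 0 <= a -> spd (C + a%:M).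
Proof.
move=> [sC pC] a0; split; first by rewrite linearD /= tr_scalar_mx sC.
move=> v v0; rewrite -/(qform _ _) -scalemx1 qformD qformZ qform1.
by have := pC v v0; have := sqnorm_ge0 v; rewrite /qform; nra.
Qed.

End PositiveDefinite.

Section SquareRoot.
Context {R : realType}.

Lemma sqrt_params_exist (e1 e2 : R) : 0 < e1 -> 0 < e2 ->
  exists s1 s2 : R, [/\ 0 <= s1, 0 < s2, s1 ^+ 2 = e1 + 2 * s2 & s2 ^+ 2 = e2 + 2 * s1].
Proof.
move=> e1_gt0 e2_gt0.
pose p : {poly R} := ('X^2 - e1%:P) ^+ 2 * (4^-1)%:P - e2%:P - 2%:P * 'X.
have pE t : p.[t] = (t ^+ 2 - e1) ^+ 2 / 4 - e2 - 2 * t by rewrite /p !hornerE.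
pose a := Num.sqrt e1; pose b := e1 + e2 + 3.
have a2 : a ^+ 2 = e1 by rewrite sqr_sqrtr // ltW.
have a0 : 0 <= a by rewrite sqrtr_ge0.
have ab : a <= b by rewrite /b; nra.
have pa : p.[a] <= 0 by rewrite pE a2 subrr expr0n /= mul0r; lra.
have pb : 0 <= p.[b].
  have h1 : 2 * b <= b ^+ 2 - e1 by rewrite /b; nra.
  have h2 : b ^+ 2 <= (b ^+ 2 - e1) ^+ 2 / 4 by rewrite /b in h1 *; nra.
  by rewrite pE; rewrite /b in h2 *; nra.
have [s1 /andP[as1 _] /rootP ps1] := poly_ivt ab (introT andP (conj pa pb)).
rewrite pE in ps1.
pose s2 := (s1 ^+ 2 - e1) / 2.
have s2_sqr : s2 ^+ 2 = e2 + 2 * s1 by rewrite /s2; lra.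
have s2_ge0 : 0 <= s2 by rewrite /s2; nra.
exists s1, s2; split => //; [lra | | rewrite /s2; lra].
rewrite lt_def s2_ge0 andbT; apply/eqP => s2_0.
by move: s2_sqr; rewrite s2_0 expr0n /=; lra.
Qed.

Lemma spd_sqrt_exists (C : 'M[R]_3) : inM C -> exists S, spd S /\ S *m S = C.
Proof.
move=> [spdC detC]; have [sC pC] := spdC.
have [trC_gt0 m2C_gt0] := spd_trace_minors_gt0 spdC.
have [s1 [s2 [s1_ge0 s2_gt0 s1_sqr s2_sqr]]] := sqrt_params_exist trC_gt0 m2C_gt0.
(* The root is (s1 C + 1) (C + s2)^-1, where s1 and s2 are the first two
   elementary symmetric functions of its eigenvalues. *)
pose P := C + s2%:M; pose Q := s1 *: C + 1%:M.
have P_affine : P = 1 *: C + s2%:M by rewrite scale1r.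
have PQ_comm : P *m Q = Q *m P.
  by rewrite P_affine !mulmx_affine; congr (_ *: _ + _ *: _ + _ *: _); ring.
have PQ_expand : P *m Q = s1 *: (C *m C) + (1 + s1 * s2) *: C + s2 *: 1%:M.
  by rewrite P_affine mulmx_affine; congr (_ *: _ + _ *: _ + _ *: _); ring.
have QQ : Q *m Q = C *m P *m P.
  apply/eqP; rewrite -subr_eq0; apply/eqP; rewrite cayley_hamilton_sqr detC.
  have -> : s1 ^+ 2 - \tr C - 2 * s2 = 0 by rewrite s1_sqr; ring.
  have -> : 2 * s1 + sum_principal_minors2 C - s2 ^+ 2 = 0 by rewrite s2_sqr; ring.
  by rewrite subrr !scale0r !addr0.
have spdP : spd P by apply: spdD_scalar; [split | exact: ltW].
have P_unit : P \in unitmx by apply: spd_unitmx.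
have sP : P^T = P by case: spdP.
have sQ : Q^T = Q by rewrite linearD /= linearZ /= tr_scalar_mx sC.
have invP_Q : invmx P *m Q = Q *m invmx P.
  have -> : Q *m invmx P = invmx P *m (P *m Q) *m invmx P by rewrite mulKmx.
  by rewrite PQ_comm !mulmxA mulmxK.
exists (Q *m invmx P); split; last first.
  by rewrite mulmxA -(mulmxA Q) invP_Q mulmxA QQ !mulmxK.
split; first by rewrite trmx_mul trmx_inv sP sQ invP_Q.
move=> v v0; rewrite -/(qform _ _).
pose u := v *m invmx P.
have vE : v = u *m P by rewrite /u mulmxKV.
have u0 : u != 0 by apply: contraNneq v0 => u0; rewrite vE u0 mul0mx.
have -> : qform (Q *m invmx P) v = qform (P *m Q) u.
  rewrite /qform vE trmx_mul sP !mulmxA; congr (_ 0 0); congr (_ *m _).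
  by rewrite mulmxKV.
rewrite PQ_expand !qformD !qformZ qform1 qform_sqr //.
have := sqnorm_ge0 (u *m C); have := sqnorm_gt0 u0; have := pC u u0.
rewrite -/(qform _ _); have : 0 <= s1 * s2 by apply: mulr_ge0; [|exact: ltW].
nra.
Qed.

Lemma sqrtmP (C : 'M[R]_3) : inM C -> spd (sqrtm C) /\ sqrtm C *m sqrtm C = C.
Proof. by move=> /spd_sqrt_exists; apply: xgetPex. Qed.

End SquareRoot.

Section SumOfSquares.
Context {R : realDomainType}.

Lemma sum_mul_sqr_le n (a b : 'I_n -> R) :
  (\sum_i a i * b i) ^+ 2 <= (\sum_i a i ^+ 2) * (\sum_i b i ^+ 2).
Proof.
set A := \sum_i a i ^+ 2; set B := \sum_i b i ^+ 2; set P := \sum_i a i * b i.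
have double_sum (F G : 'I_n -> R) :
    (\sum_i F i) * (\sum_j G j) = \sum_i \sum_j F i * G j.
  by rewrite big_distrl; apply: eq_bigr => i _; rewrite big_distrr.
have lagrange : \sum_i \sum_j (a i * b j - a j * b i) ^+ 2 = 2 * (A * B - P ^+ 2).
  transitivity (\sum_i \sum_j a i ^+ 2 * b j ^+ 2 + \sum_i \sum_j b i ^+ 2 * a j ^+ 2
                - 2 * \sum_i \sum_j (a i * b i) * (a j * b j)).
    rewrite mulr_sumr -big_split -sumrB /=; apply: eq_bigr => i _.
    rewrite mulr_sumr -big_split -sumrB /=; apply: eq_bigr => j _; ring.
  rewrite -(double_sum (fun i => a i ^+ 2)) -(double_sum (fun i => b i ^+ 2)).
  by rewrite -(double_sum (fun i => a i * b i)) -/A -/B -/P; ring.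
have : 0 <= \sum_i \sum_j (a i * b j - a j * b i) ^+ 2.
  by apply: sumr_ge0 => i _; apply: sumr_ge0 => j _; apply: sqr_ge0.
rewrite lagrange; lra.
Qed.

Definition frob2 m n (A : 'M[R]_(m, n)) : R := \sum_i \sum_j A i j ^+ 2.

Lemma frob2_ge0 m n (A : 'M[R]_(m, n)) : 0 <= frob2 A.
Proof. by apply: sumr_ge0 => i _; apply: sumr_ge0 => j _; apply: sqr_ge0. Qed.

Lemma mxtrace_mulmx_tr m n (A : 'M[R]_(m, n)) : \tr (A *m A^T) = frob2 A.
Proof.
by apply: eq_bigr => i _; rewrite mxE; apply: eq_bigr => j _; rewrite mxE expr2.
Qed.

Lemma sqr_entry_le_frob2 m n (A : 'M[R]_(m, n)) i j : A i j ^+ 2 <= frob2 A.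
Proof.
rewrite /frob2 (bigD1 i) //= (bigD1 j) //= -addrA lerDl.
by apply: addr_ge0; apply: sumr_ge0 => *; [|apply: sumr_ge0 => *]; apply: sqr_ge0.
Qed.

Lemma frob2_mulmx m n p (A : 'M[R]_(m, n)) (B : 'M[R]_(n, p)) :
  frob2 (A *m B) <= frob2 A * frob2 B.
Proof.
apply: (@le_trans _ _ (\sum_i \sum_j
   ((\sum_k A i k ^+ 2) * (\sum_k B k j ^+ 2)))).
  by apply: ler_sum => i _; apply: ler_sum => j _; rewrite mxE; apply: sum_mul_sqr_le.
rewrite big_distrl /=; apply: ler_sum => i _.
by rewrite [X in _ <= _ * X]exchange_big big_distrr /=.
Qed.

Lemma normr_det_le n (A : 'M[R]_n) (r : R) :
  (forall i j, `|A i j| <= r) -> `|\det A| <= r ^+ n *+ n`!.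
Proof.
move=> Ar; apply: le_trans (ler_norm_sum _ _ _) _.
rewrite -card_Sn -sumr_const; apply: ler_sum => s _.
rewrite normrM normrX normrN1 expr1n mul1r normr_prod.
rewrite -[n in r ^+ n]card_ord -prodr_const; apply: ler_prod => i _.
by rewrite normr_ge0 Ar.
Qed.

End SumOfSquares.

Section Frobenius.
Context {R : realType}.
Implicit Types A B Y : 'M[R]_3.

Lemma frobE A : frob A = Num.sqrt (frob2 A).
Proof. by rewrite /frob mxtrace_mulmx_tr. Qed.

Lemma frob_ge0 A : 0 <= frob A.
Proof. by rewrite sqrtr_ge0. Qed.

Lemma sqr_frob A : frob A ^+ 2 = \tr (A *m A^T).
Proof. by rewrite sqr_sqrtr // mxtrace_mulmx_tr frob2_ge0. Qed.

Lemma frob_mulmx A B : frob (A *m B) <= frob A * frob B.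
Proof. by rewrite !frobE -sqrtrM ?frob2_ge0 // ler_sqrt ?mulr_ge0 ?frob2_ge0 ?frob2_mulmx. Qed.

Lemma normr_entry_le_frob A i j : `|A i j| <= frob A.
Proof. by rewrite -sqrtr_sqr frobE ler_sqrt ?frob2_ge0 ?sqr_entry_le_frob2. Qed.

Lemma small_root_bounds (s d r : R) : 0 <= r -> r <= 1 / 24 ->
  `|s| <= 3 * r -> `|d| <= 6 * r ^+ 3 -> s + (s ^+ 2 - r ^+ 2) / 2 + d = 0 ->
  r ^+ 2 / 8 <= s /\ s <= r ^+ 2.
Proof.
move=> r0 r_small /ler_normlP[s_lo s_hi] /ler_normlP[d_lo d_hi] root.
have r3 : 6 * r ^+ 3 <= r ^+ 2 / 4 by rewrite exprS; nra.
have r4 : r ^+ 4 <= r ^+ 2 / 4 by rewrite (exprD r 2 2); rewrite !expr2; nra.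
have sE : s * (1 + s / 2) = r ^+ 2 / 2 - d by rewrite expr2 in root *; lra.
have s0 : 0 <= s by nra.
have s_hi' : s <= r ^+ 2 by nra.
split=> //; have : s ^+ 2 <= r ^+ 4 by rewrite (exprD r 2 2) expr2; nra.
by rewrite expr2 in sE *; nra.
Qed.

Lemma trace_bounds_sym_det1 Y : Y^T = Y -> \det (Y + 1%:M) = 1 -> frob Y <= 1 / 24 ->
  frob Y ^+ 2 / 8 <= \tr Y /\ \tr Y <= frob Y ^+ 2.
Proof.
move=> sY detY r_small; set r := frob Y.
have Yr i j : `|Y i j| <= r := normr_entry_le_frob Y i j.
have tr_bound : `|\tr Y| <= 3 * r.
  rewrite /mxtrace big_ord3.
  have := ler_normD (Y i0 i0 + Y i1 i1) (Y i2 i2); have := ler_normD (Y i0 i0) (Y i1 i1).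
  by have := Yr i0 i0; have := Yr i1 i1; have := Yr i2 i2; lra.
have det_bound : `|\det Y| <= 6 * r ^+ 3.
  by have := normr_det_le Yr; rewrite -mulr_natl.
apply: small_root_bounds (frob_ge0 Y) r_small tr_bound det_bound _.
have := det_mx3_add1 Y; rewrite detY /r sqr_frob sY; lra.
Qed.

End Frobenius.

Lemma psi_el_det1 {R : realType} (k mu : R) (A : 'M[R]_3) :
  \det A = 1 -> psi_el k mu A = mu / 2 * (\tr A - 3).
Proof. by move=> detA; rewrite /psi_el detA sqrtr1 ln1 expr0n /= mulr0 add0r powR1 scale1r. Qed.

Lemma frob_sandwich {R : realType} (A B : 'M[R]_3) : frob (A *m B *m A) <= frob A ^+ 2 * frob B.
Proof.
apply: le_trans (frob_mulmx _ _) _; rewrite expr2 mulrAC.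
by apply: ler_wpM2r; [apply: frob_ge0 | apply: frob_mulmx].
Qed.

Definition rel_dev {R : realType} (C1 C2 : 'M[R]_3) : 'M[R]_3 :=
  invmx (sqrtm C2) *m C1 *m invmx (sqrtm C2) - 1%:M.

Section RelativeDeviation.
Context {R : realType}.
Variables C1 C2 : 'M[R]_3.
Hypotheses (C1M : inM C1) (C2M : inM C2).

Let S := sqrtm C2.
Let T := invmx S.

Let spdS : spd S. Proof. by case: (sqrtmP C2M). Qed.
Let SS : S *m S = C2. Proof. by case: (sqrtmP C2M). Qed.
Let S_unit : S \in unitmx. Proof. exact: spd_unitmx spdS. Qed.
Let ST : S *m T = 1%:M. Proof. exact: mulmxV. Qed.
Let TS : T *m S = 1%:M. Proof. exact: mulVmx. Qed.

Lemma sub_rel_dev : C1 - C2 = S *m rel_dev C1 C2 *m S.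
Proof.
rewrite /rel_dev -/S -/T mulmxBr mulmxBl mulmx1 SS !mulmxA ST mul1mx.
by rewrite -mulmxA TS mulmx1.
Qed.

Lemma rel_devE : rel_dev C1 C2 = T *m (C1 - C2) *m T.
Proof.
by rewrite /rel_dev -/S -/T mulmxBr mulmxBl -SS !mulmxA TS mul1mx -mulmxA ST.
Qed.

Lemma rel_dev_sym : (rel_dev C1 C2)^T = rel_dev C1 C2.
Proof.
have [[sC1 _] _] := C1M; have sS : S^T = S by case: spdS.
by rewrite /rel_dev -/S -/T linearB /= tr_scalar_mx !trmx_mul trmx_inv sS sC1 mulmxA.
Qed.

Lemma det_rel_dev_add1 : \det (rel_dev C1 C2 + 1%:M) = 1.
Proof.
have [_ detC1] := C1M; have [_ detC2] := C2M.
have detS : \det S * \det S = 1 by rewrite -det_mulmx SS.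
by rewrite /rel_dev subrK !det_mulmx det_inv detC1 mulr1 -invrM ?detS ?invr1.
Qed.

Lemma Dist_rel_dev (k mu : R) : Dist k mu C1 C2 = Num.sqrt (mu / 2 * \tr (rel_dev C1 C2)).
Proof.
have [_ detC1] := C1M; have [_ detC2] := C2M.
have invC2 : invmx C2 = T *m T.
  have C2TT : C2 *m (T *m T) = 1%:M by rewrite -SS -mulmxA (mulmxA S T) ST mul1mx ST.
  by rewrite -[LHS]mulmx1 -C2TT mulKmx // -SS unitmx_mul S_unit.
rewrite /Dist psi_el_det1; last by rewrite det_mulmx det_inv detC1 detC2 invr1 mulr1.
rewrite invC2 mulmxA mxtrace_mulC /rel_dev -/S -/T linearB /= mxtrace1 mulmxA.
by congr (Num.sqrt (_ * _)); ring.
Qed.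

End RelativeDeviation.

Lemma Dist_rel_dev_bounds {R : realType} (k mu : R) (C1 C2 : 'M[R]_3) :
  0 < mu -> inM C1 -> inM C2 -> frob (rel_dev C1 C2) <= 1 / 24 ->
  Num.sqrt (mu / 16) * frob (rel_dev C1 C2) <= Dist k mu C1 C2
  <= Num.sqrt (mu / 2) * frob (rel_dev C1 C2).
Proof.
move=> mu_gt0 C1M C2M small.
have [lo hi] := trace_bounds_sym_det1 (rel_dev_sym C1M C2M) (det_rel_dev_add1 C1M C2M) small.
rewrite Dist_rel_dev //; move: lo hi; set r := frob _ => lo hi.
have r0 : 0 <= r := frob_ge0 _.
have mu0 : 0 <= mu by apply: ltW.
have tr0 : 0 <= \tr (rel_dev C1 C2) by have := sqr_ge0 r; lra.
rewrite -(ger0_norm r0) -sqrtr_sqr -!sqrtrM ?divr_ge0 //.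
by rewrite !ler_sqrt ?mulr_ge0 ?divr_ge0 ?sqr_ge0 //; apply/andP; split; nra.
Qed.

Theorem mainTheorem3 (R : realType) (k mu L : R) (hk : 0 < k) (hmu : 0 < mu) :
  exists eps : R, exists C3 : R, exists C4 : R,
    0 < eps /\ 0 < C3 /\
    forall C1 C2 : 'M[R]_3,
      inM C1 -> inM C2 ->
      frob (sqrtm C1) < L -> frob (invmx (sqrtm C1)) < L ->
      frob (sqrtm C2) < L -> frob (invmx (sqrtm C2)) < L ->
      frob (C1 - C2) <= eps ->
      C3 * frob (C1 - C2) <= Dist k mu C1 C2 /\
      Dist k mu C1 C2 <= C4 * frob (C1 - C2).
Proof.
pose K := L ^+ 2 + 1.
have K_gt0 : 0 < K by rewrite /K; have := sqr_ge0 L; lra.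
have sqr_le_K (A : 'M[R]_3) : frob A < L -> frob A ^+ 2 <= K.
  by move=> AL; have := frob_ge0 A; rewrite /K; nra.
exists (24 * K)^-1, (Num.sqrt (mu / 16) / K), (Num.sqrt (mu / 2) * K).
split; first by rewrite invr_gt0; lra.
split; first by rewrite divr_gt0 // sqrtr_gt0; lra.
move=> C1 C2 C1M C2M _ _ S_lt T_lt D_small.
set D := C1 - C2; set Y := rel_dev C1 C2.
have D_le : frob D <= K * frob Y.
  rewrite /D (sub_rel_dev C1 C2M); apply: le_trans (frob_sandwich _ _) _.
  by apply: ler_wpM2r; [apply: frob_ge0 | apply: sqr_le_K].
have Y_le : frob Y <= K * frob D.
  rewrite /Y (rel_devE C1 C2M); apply: le_trans (frob_sandwich _ _) _.
  by apply: ler_wpM2r; [apply: frob_ge0 | apply: sqr_le_K].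
have Y_small : frob Y <= 1 / 24.
  have -> : 1 / 24 = K * (24 * K)^-1 by field; lra.
  by apply: le_trans Y_le _; apply: ler_wpM2l; [apply: ltW|].
have /andP[lo hi] := Dist_rel_dev_bounds k hmu C1M C2M Y_small.
split.
- apply: le_trans lo; rewrite mulrAC ler_pdivrMr // -mulrA.
  by rewrite ler_wpM2l ?sqrtr_ge0 // mulrC.
- apply: le_trans hi _; rewrite -mulrA ler_wpM2l ?sqrtr_ge0 // mulrC.
Qed.
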